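(* Let $V$ be a nonzero finite-dimensional real vector space and let $\mathcal{U}\subset V^*$ be a $\bigvee$-system with multiplicities $h_\alpha$ ($\alpha\in\mathcal{U}$), constant $h_{\mathcal{U}}$ and associated non-degenerate metric $(\cdot,\cdot)$ on $V$, i.e. $\sum_{\alpha\in\mathcal{U}}h_\alpha\,\alpha(x)\alpha(y)=h_{\mathcal{U}}\,(x,y)$ for all $x,y\in V$. Let $\vartheta_s$ be an invariant small orbit of $\mathcal{U}$ with multiplicities $h_w$ ($w\in\vartheta_s$) and constant $h_s$. Let $V^{ext}=V\oplus V^\perp$ with $V^\perp=\mathrm{span}\{n^\vee\}$, equipped with the non-degenerate metric $(z_o+z^\perp,z_o'+z'^\perp)^{ext}=(z_o,z_o')+(z^\perp,z'^\perp)^{ext}$ ($z_o,z_o'\in V$, $z^\perp,z'^\perp\in V^\perp$), where $(n^\vee,n^\vee)^{ext}\neq 0$ is a given number, and let $n\in (V^{ext})^*$ be the covector $n(z)=(n^\vee,z)^{ext}$. Let $\mathcal{U}^{ext}=\mathcal{U}\cup\{\pm(w+n): w\in\vartheta_s\}\cup\{\pm n\}$, where the covectors $\pm(w+n)$ carry multiplicity $h_w$ and $\pm n$ carry multiplicity $h_n$. Then there exists a constant $h_{\mathcal{U}^{ext}}$ such that $$h_{\mathcal{U}^{ext}}\,(x,y)^{ext}=\sum_{\alpha\in\mathcal{U}^{ext}}h_\alpha\,\alpha(x)\alpha(y)\quad\text{for all }x,y\in V^{ext}$$ if and only if $$h_{\mathcal{U}}+2h_s=2\Big\{h_n+\sum_{w\in\vartheta_s}h_w\Big\}(n^\vee,n^\vee)^{ext}.$$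 In that case $h_{\mathcal{U}^{ext}}=h_{\mathcal{U}}+2h_s$.
   Context: Setting: $V$ is a real vector space and $\mathcal{U}\subset V^*$ a finite set of covectors spanning $V^*$, each $\alpha\in\mathcal{U}$ carrying a real number $h_\alpha$ (its multiplicity, possibly negative). A metric $(\cdot,\cdot)$ on $V$ is defined by $\sum_{\alpha\in\mathcal{U}}h_\alpha\alpha(x)\alpha(y)=h_{\mathcal{U}}(x,y)$ for a fixed nonzero constant $h_{\mathcal{U}}$, and is assumed non-degenerate (not necessarily positive definite). It gives an isomorphism $V\to V^*$; write $\alpha^\vee\in V$ for the vector corresponding to $\alpha\in V^*$. $\mathcal{U}$ is a $\bigvee$-system if for each $\alpha\in\mathcal{U}$ and each two-plane $\Pi\subset V^*$ containing $\alpha$ one has $\sum_{\beta\in\Pi\cap\mathcal{U}}h_\beta\,\beta(\alpha^\vee)\beta^\vee=\lambda\,\alpha^\vee$ for some scalar $\lambda$ (depending on $\Pi$ and $\alpha$). A small orbit of $\mathcal{U}$ is a finite set $\vartheta_s\subset V^*$ such that $w_1-w_2\in\mathcal{U}$ for all distinct $w_1,w_2\in\vartheta_s$; it is an invariant small orbit if it comes with multiplicities $h_w$ ($w\in\vartheta_s$) such that $\sum_{w\in\vartheta_s}h_w w(z)^2=h_s(z,z)$ for some constant $h_s$ and $\sum_{w\in\vartheta_s}h_w w(z)=0$, for all $z\in V$. Covectors on $V$ (elements of $\mathcal{U}$ and $\vartheta_s$) are regarded as covectors on $V^{ext}=V\oplus V^\perp$ by letting them vanish on $V^\perp$. *)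

(* V = 'rV[R]_n (R a real field), covectors on V are also
   represented by row vectors a : 'rV[R]_n acting by a(x) = sum_i a_i x_i.
   A metric on V is given by its Gram matrix G : 'M[R]_n. *)
From HB Require Import structures.
From mathcomp Require Import all_boot all_order all_algebra.
Set Implicit Arguments. Unset Strict Implicit. Unset Printing Implicit Defensive.
Import Order.TTheory GRing.Theory Num.Theory.
Local Open Scope ring_scope.

Definition cev (R : ringType) (m : nat) (a x : 'rV[R]_m) : R := (a *m x^T) 0 0.

Definition bform (R : ringType) (m : nat) (G : 'M[R]_m) (x y : 'rV[R]_m) : R :=
  (x *m G *m y^T) 0 0.

(* alpha^vee : the vector corresponding to the covector a via the metric G,
   i.e. bform G (vee G a) x = cev a x (for G symmetric and invertible) *)
Definition vee (R : comUnitRingType) (m : nat) (G : 'M[R]_m) (a : 'rV[R]_m) : 'rV[R]_m :=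
  a *m invmx G.

(* V-system condition: for every alpha in U and every two-plane P of V^*
   (given by the row space of a rank-2 matrix) containing alpha,
   sum_{beta in P cap U} h_beta beta(alpha^vee) beta^vee is proportional to alpha^vee *)
Definition Vsystem (R : fieldType) (m : nat) (G : 'M[R]_m) (U : seq 'rV[R]_m)
  (h : 'rV[R]_m -> R) : Prop :=
  forall a, a \in U -> forall P : 'M[R]_(2, m), \rank P = 2%N -> (a <= P)%MS ->
    exists lam : R,
      \sum_(b <- U | (b <= P)%MS) (h b * cev b (vee G a)) *: vee G b = lam *: vee G a.

Definition small_orbit (R : ringType) (m : nat) (U th : seq 'rV[R]_m) : Prop :=
  forall w1 w2, w1 \in th -> w2 \in th -> w1 != w2 -> w1 - w2 \in U.

Definition invariant_orbit (R : ringType) (m : nat) (G : 'M[R]_m) (th : seq 'rV[R]_m)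
  (hw : 'rV[R]_m -> R) (hs : R) : Prop :=
  (forall z, \sum_(w <- th) hw w * cev w z ^+ 2 = hs * bform G z z) /\
  (forall z, \sum_(w <- th) hw w * cev w z = 0).

(* Extended space V^ext = V (+) V^perp = 'rV_(m + 1); the last coordinate is the
   coordinate along n^vee. *)
Definition Gext (R : ringType) (m : nat) (G : 'M[R]_m) (c : R) : 'M[R]_(m + 1) :=
  block_mx G 0 0 c%:M.

Definition nvee (R : ringType) (m : nat) : 'rV[R]_(m + 1) := row_mx 0 (const_mx 1).

Definition ncov (R : ringType) (m : nat) (G : 'M[R]_m) (c : R) : 'rV[R]_(m + 1) :=
  nvee R m *m Gext G c.

Definition extc (R : ringType) (m : nat) (a : 'rV[R]_m) : 'rV[R]_(m + 1) := row_mx a 0.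

(* U^ext as a list of (covector, multiplicity) pairs *)
Definition Uext (R : ringType) (m : nat) (G : 'M[R]_m) (c : R) (U : seq 'rV[R]_m)
  (h : 'rV[R]_m -> R) (th : seq 'rV[R]_m) (hw : 'rV[R]_m -> R) (hn : R)
  : seq ('rV[R]_(m + 1) * R) :=
  [seq (extc a, h a) | a <- U]
  ++ flatten [seq [:: (extc w + ncov G c, hw w); (- (extc w + ncov G c), hw w)] | w <- th]
  ++ [:: (ncov G c, hn); (- ncov G c, hn)].

(* Write z = (z_o, s) in V^ext = V (+) R n^vee and c = (n^vee, n^vee)^ext, so that
   (z, z')^ext = (z_o, z'_o) + c s s' and n(z) = c s.  In the sum over U^ext each pair
   of opposite covectors contributes twice the term of one of them; for the pairs
   +-(w + n) the cross terms vanish because sum_w h_w w = 0, and the orbit terms add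
   up to 2 h_s (z_o, z'_o) by polarizing the invariance identity.  Hence the sum is
   (h_U + 2 h_s) (z_o, z'_o) + 2 (h_n + sum_w h_w) c^2 s s', and comparing with
   h (z, z')^ext on a pair of vectors of V with (z_o, z'_o) = 1 (non-degeneracy) and
   on n^vee gives both claims. *)
From HB Require Import structures.
From mathcomp Require Import all_boot all_order all_algebra.
From mathcomp Require Import ring.
Set Implicit Arguments. Unset Strict Implicit. Unset Printing Implicit Defensive.
Import Order.TTheory GRing.Theory Num.Theory.
Local Open Scope ring_scope.

Section CovectorCalculus.
Variables (R : comNzRingType) (m : nat).
Implicit Types (a b x y z : 'rV[R]_m) (G : 'M[R]_m).

Lemma cevDl a b x : cev (a + b) x = cev a x + cev b x.
Proof. by rewrite /cev mulmxDl mxE. Qed.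

Lemma cevNl a x : cev (- a) x = - cev a x.
Proof. by rewrite /cev mulNmx mxE. Qed.

Lemma cevDr a x y : cev a (x + y) = cev a x + cev a y.
Proof. by rewrite /cev linearD /= mulmxDr mxE. Qed.

Lemma bform0l G y : bform G 0 y = 0.
Proof. by rewrite /bform !mul0mx mxE. Qed.

Lemma bformDl G x y z : bform G (x + y) z = bform G x z + bform G y z.
Proof. by rewrite /bform !mulmxDl mxE. Qed.

Lemma bformDr G x y z : bform G z (x + y) = bform G z x + bform G z y.
Proof. by rewrite /bform linearD /= mulmxDr mxE. Qed.

Lemma bformC G x y : G^T = G -> bform G x y = bform G y x.
Proof.
move=> sG; rewrite /bform.
have -> : (x *m G *m y^T) 0 0 = ((x *m G *m y^T)^T) 0 0 by rewrite [RHS]mxE.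
by rewrite !trmx_mul !trmxK sG mulmxA.
Qed.

Lemma cev_row_mx a (b : 'rV[R]_1) (x : 'rV[R]_(m + 1)) :
  cev (row_mx a b) x = cev a (lsubmx x) + b 0 0 * rsubmx x 0 0.
Proof.
rewrite /cev -[in LHS](hsubmxK x) tr_row_mx mul_row_col mxE; congr (_ + _).
by rewrite mxE big_ord1 mxE.
Qed.

Lemma cev_extc a (x : 'rV[R]_(m + 1)) : cev (extc a) x = cev a (lsubmx x).
Proof. by rewrite /extc cev_row_mx mxE mul0r addr0. Qed.

Lemma ncovE G c : ncov G c = row_mx 0 c%:M.
Proof.
rewrite /ncov /nvee /Gext mul_row_block !mulmx0 mul0mx !addr0 add0r.
by congr row_mx; apply/matrixP => i j; rewrite !ord1 !mxE big_ord1 !mxE mul1r.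
Qed.

Lemma cev_ncov G c (x : 'rV[R]_(m + 1)) : cev (ncov G c) x = c * rsubmx x 0 0.
Proof. by rewrite ncovE cev_row_mx /cev mul0mx mxE add0r mxE eqxx mulr1n. Qed.

Lemma bform_Gext G c (x y : 'rV[R]_(m + 1)) :
  bform (Gext G c) x y
  = bform G (lsubmx x) (lsubmx y) + c * (rsubmx x 0 0 * rsubmx y 0 0).
Proof.
rewrite /bform /Gext -[in LHS](hsubmxK x) -[in LHS](hsubmxK y).
rewrite mul_row_block !mulmx0 addr0 add0r tr_row_mx mul_row_col mxE; congr (_ + _).
rewrite mul_mx_scalar -scalemxAl !mxE big_ord1 !mxE.
by rewrite mulrCA mulrA.
Qed.

Lemma sum_opp_pair a k x y :
  \sum_(p <- [:: (a, k); (- a, k)]) p.2 * cev p.1 x * cev p.1 y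
  = 2 * (k * cev a x * cev a y).
Proof. by rewrite !big_cons big_nil /= !cevNl; ring. Qed.

End CovectorCalculus.

Lemma invariant_orbit_polar (R : numFieldType) m (G : 'M[R]_m) th hw hs :
  G^T = G -> invariant_orbit G th hw hs ->
  forall x y, \sum_(w <- th) hw w * cev w x * cev w y = hs * bform G x y.
Proof.
move=> sG [quad _] x y.
have expand z z' : \sum_(w <- th) hw w * cev w (z + z') ^+ 2
    = \sum_(w <- th) hw w * cev w z ^+ 2 + \sum_(w <- th) hw w * cev w z' ^+ 2
      + 2 * \sum_(w <- th) hw w * cev w z * cev w z'.
  by rewrite mulr_sumr -!big_split; apply: eq_bigr => w _ /=; rewrite cevDr; ring.
have := quad (x + y); rewrite expand !quad bformDl !bformDr [bform G y x]bformC //.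
have -> : hs * (bform G x x + bform G x y + (bform G x y + bform G y y))
    = hs * bform G x x + hs * bform G y y + 2 * (hs * bform G x y) by ring.
have two_neq0 : (2 : R) != 0 by rewrite pnatr_eq0.
by move/addrI/(mulfI two_neq0).
Qed.

Lemma sum_Uext (R : comNzRingType) m (G : 'M[R]_m) (U : seq 'rV[R]_m) h hU
    th hw hs c hn :
  (forall x y, \sum_(a <- U) h a * cev a x * cev a y = hU * bform G x y) ->
  (forall x y, \sum_(w <- th) hw w * cev w x * cev w y = hs * bform G x y) ->
  (forall z, \sum_(w <- th) hw w * cev w z = 0) ->
  forall x y : 'rV[R]_(m + 1),
  \sum_(p <- Uext G c U h th hw hn) p.2 * cev p.1 x * cev p.1 y
  = (hU + 2 * hs) * bform G (lsubmx x) (lsubmx y)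
    + 2 * (hn + \sum_(w <- th) hw w) * c ^+ 2 * (rsubmx x 0 0 * rsubmx y 0 0).
Proof.
move=> metricU orbit_bilin orbit_lin x y.
rewrite /Uext !big_cat big_map big_flatten big_map /= sum_opp_pair.
under eq_bigr do rewrite !cev_extc.
under [X in _ + (X + _)]eq_bigr do rewrite sum_opp_pair !cevDl !cev_extc !cev_ncov.
rewrite metricU !cev_ncov.
set xo := lsubmx x; set yo := lsubmx y; set s : R := rsubmx x 0 0; set t : R := rsubmx y 0 0.
have -> : \sum_(w <- th) 2 * (hw w * (cev w xo + c * s) * (cev w yo + c * t))
    = 2 * (\sum_(w <- th) hw w * cev w xo * cev w yo
           + c * t * \sum_(w <- th) hw w * cev w xo
           + c * s * \sum_(w <- th) hw w * cev w yo
           + c * s * (c * t) * \sum_(w <- th) hw w).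
  by rewrite !mulr_sumr -!big_split /= mulr_sumr; apply: eq_bigr => w _; ring.
by rewrite orbit_bilin !orbit_lin; ring.
Qed.

Lemma exists_bform_eq1 (R : fieldType) m (G : 'M[R]_m) :
  (0 < m)%N -> G \in unitmx -> exists x y, bform G x y = 1.
Proof.
move=> m_gt0 uG; pose x : 'rV[R]_m := delta_mx 0 (Ordinal m_gt0).
exists x, (x *m (invmx G)^T).
rewrite /bform trmx_mul trmxK !mulmxA -(mulmxA x G) mulmxV // mulmx1.
by rewrite /x trmx_delta mul_delta_mx mxE !eqxx.
Qed.

Theorem lemma2p2 (R : realFieldType) (m : nat) (G : 'M[R]_m)
  (U : seq 'rV[R]_m) (h : 'rV[R]_m -> R) (hU : R)
  (th : seq 'rV[R]_m) (hw : 'rV[R]_m -> R) (hs : R) (c hn : R) :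
  (0 < m)%N ->
  G^T = G -> G \in unitmx ->
  uniq U -> (forall a : 'rV[R]_m, (a <= \sum_(b <- U) <<b>>)%MS) ->
  hU != 0 ->
  (forall x y, \sum_(a <- U) h a * cev a x * cev a y = hU * bform G x y) ->
  Vsystem G U h ->
  uniq th -> small_orbit U th -> invariant_orbit G th hw hs ->
  c != 0 -> bform (Gext G c) (nvee R m) (nvee R m) = c ->
  ((exists hext : R, forall x y : 'rV[R]_(m + 1),
       hext * bform (Gext G c) x y
       = \sum_(p <- Uext G c U h th hw hn) p.2 * cev p.1 x * cev p.1 y)
   <-> hU + 2 * hs = 2 * (hn + \sum_(w <- th) hw w) * c) /\
  (forall hext : R, (forall x y : 'rV[R]_(m + 1),
       hext * bform (Gext G c) x y
       = \sum_(p <- Uext G c U h th hw hn) p.2 * cev p.1 x * cev p.1 y) ->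
     hext = hU + 2 * hs).
Proof.
move=> m_gt0 sG uG _ _ _ metricU _ _ _ orbit c_neq0 _.
have sumE := sum_Uext c hn metricU (invariant_orbit_polar sG orbit) orbit.2.
have [x0 [y0 B0]] := exists_bform_eq1 m_gt0 uG.
have hextE hext : (forall x y : 'rV[R]_(m + 1),
    hext * bform (Gext G c) x y
    = \sum_(p <- Uext G c U h th hw hn) p.2 * cev p.1 x * cev p.1 y) ->
    hext = hU + 2 * hs.
  move=> /(_ (row_mx x0 0) (row_mx y0 0)).
  by rewrite sumE bform_Gext !row_mxKl !row_mxKr B0 mxE !(mul0r, mulr0, addr0, mulr1).
split=> //; split.
- case=> hext H; have := H (nvee R m) (nvee R m).
  rewrite sumE bform_Gext (hextE _ H) /nvee !row_mxKl !row_mxKr bform0l mxE.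
  by rewrite !(mulr0, add0r, addr0, mulr1) expr2 mulrA => /(mulIf c_neq0).
- move=> E; exists (hU + 2 * hs) => x y.
  by rewrite sumE bform_Gext E; ring.
Qed.
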